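(* Let $n\geq 1$ be an integer and let $a,b,x\in\mathbb{C}$ with $b\neq 0$. Then $$\sum_{k=0}^{n-1}\binom{n-1}{k}C_{k+1}^{(a,b)}x^{k}(x-a)^{n-1-k}(x-b)^{n-1-k}=\sum_{k=0}^{n-1}\frac{1}{n}\binom{n}{k}\binom{n}{k+1}x^{2k}a^{n-k}b^{n-1-k}=\frac{1}{b}\sum_{k=0}^{n}\binom{n+k}{2k}C_k x^{2k}(ab-x^2)^{n-k},$$ where $C_k$ is the $k$-th Catalan number and $C_m^{(a,b)}$ is the valley type $(a,b)$-Catalan number defined in the context.
   Context: $C_k=\frac{1}{k+1}\binom{2k}{k}$ are the Catalan numbers. For $m\geq 1$ and $a,b\in\mathbb{C}$, the valley type $(a,b)$-Catalan number is $C_m^{(a,b)}=\sum_{k=0}^{m-1}\frac{1}{m}\binom{m}{k}\binom{m}{k+1}a^{m-k}b^k$. *)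

From HB Require Import structures.
From mathcomp Require Import all_boot all_order all_algebra.
From mathcomp Require Import reals.
From mathcomp.real_closed Require Import complex.
Set Implicit Arguments. Unset Strict Implicit. Unset Printing Implicit Defensive.
Import Order.TTheory GRing.Theory Num.Theory.
Local Open Scope ring_scope.

Definition catalan (k : nat) : nat := 'C(k.*2, k) %/ k.+1.

Definition valleyCat (F : fieldType) (m : nat) (a b : F) : F :=
  \sum_(0 <= k < m) (m%:R)^-1 * ('C(m, k))%:R * ('C(m, k.+1))%:R
                    * a ^+ (m - k) * b ^+ k.

From HB Require Import structures.
From mathcomp Require Import all_boot all_order all_algebra.
From mathcomp Require Import reals.
From mathcomp.real_closed Require Import complex.
From mathcomp Require Import ring zify.
Set Implicit Arguments. Unset Strict Implicit. Unset Printing Implicit Defensive.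
Import Order.TTheory GRing.Theory Num.Theory.
Local Open Scope ring_scope.

(* [valleyCat m A B] is the homogeneous Narayana polynomial N_m(A, B), and the
   middle sum is b^-1 N_n(ab, x^2).  Everything rests on Touchard's identity
   N_m(A, B) = A T_m(A, B), T_m(A, B) = sum_i C(m-1, 2i) C_i (AB)^i (A+B)^(m-1-2i).
   Expanding each N_(k+1)(a, b) on the left this way, the sum over k collapses
   by the binomial theorem because (x-a)(x-b) + x(a+b) = ab + x^2, leaving
   a T_n(ab, x^2) = b^-1 N_n(ab, x^2).  For the right equality, expanding
   N_n(w + y, y) in powers of y and w gives coefficients C(n+j, 2j) C_j; take
   y = x^2 and w = ab - x^2.  Both coefficient identities reduce to
   Chu-Vandermonde. *)

Lemma mul_bin_bin n j k : (k <= j)%N ->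
  ('C(n, k) * 'C(n - k, j - k) = 'C(n, j) * 'C(j, k))%N.
Proof.
move=> le_kj; have [lt_nj | le_jn] := ltnP n j.
  rewrite [in RHS]bin_small // mul0n; have [lt_nk | le_kn] := ltnP n k.
    by rewrite bin_small.
  by rewrite [X in (_ * X)%N]bin_small ?muln0 //; lia.
have facts_gt0 : (0 < k`! * (j - k)`! * (n - j)`!)%N by rewrite !muln_gt0 !fact_gt0.
apply/eqP; rewrite -(eqn_pmul2r facts_gt0); apply/eqP.
have n_k_j : (n - k - (j - k) = n - j)%N by lia.
transitivity ('C(n, k) * (k`! * (n - k)`!))%N.
  by rewrite -(bin_fact (_ : j - k <= n - k)%N) ?n_k_j; [ring | lia].
rewrite (bin_fact (leq_trans le_kj le_jn)) -(bin_fact le_jn) -(bin_fact le_kj).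
ring.
Qed.

Lemma Vandermonde_succ j l :
  (\sum_(0 <= i < j.+1) 'C(j, i) * 'C(l, i.+1) = 'C(l + j, j.+1))%N.
Proof.
rewrite -binomial.Vandermonde big_ord_recl /= subn0 (bin_small (ltnSn j)) muln0.
rewrite add0n big_mkord; apply: eq_bigr => i _.
by rewrite /bump /= add1n subSS mulnC bin_sub // -ltnS.
Qed.

Lemma dvdn_catalan k : (k.+1 %| 'C(k.*2, k))%N.
Proof.
have -> : 'C(k.*2, k) = (k.+1 * ('C(k.*2, k) - 'C(k.*2, k.+1)))%N.
  by rewrite mulnBr mul_bin_left -addnn addnK mulSn addnK.
exact: dvdn_mulr.
Qed.

Section NatSums.
Variable V : nmodType.

Lemma big_nat_widen0 m n1 n2 (f : nat -> V) : (n1 <= n2)%N ->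
  (forall i, (n1 <= i < n2)%N -> f i = 0) ->
  \sum_(m <= i < n1) f i = \sum_(m <= i < n2) f i.
Proof.
move=> le_n12 f0; have [le_mn1 | lt_n1m] := leqP m n1.
  rewrite (big_cat_nat le_mn1 le_n12) /= [X in _ + X]big1_seq ?addr0 // => i.
  by rewrite mem_index_iota => /andP[_ /f0].
rewrite big_geq 1?ltnW // big1_seq // => i /andP[_].
by rewrite mem_index_iota => /andP[le_mi lt_in2]; apply: f0; lia.
Qed.

Lemma big_nat_antidiagonal N (f : nat -> nat -> V) :
  \sum_(0 <= i < N) \sum_(0 <= l < N - i) f i l
  = \sum_(0 <= j < N) \sum_(0 <= i < j.+1) f i (j - i)%N.
Proof.
elim: N => [|N IHN]; first by rewrite !big_geq.
rewrite big_nat_recr //= [RHS]big_nat_recr //= -IHN subSnn big_nat1.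
rewrite [in RHS]big_nat_recr //= subnn !addrA -big_split /=; congr (_ + _).
apply: eq_big_nat => i /andP[_ lt_iN].
by rewrite subSn 1?ltnW // big_nat_recr.
Qed.

End NatSums.

Lemma exprDn_mul_bin (R : comPzSemiRingType) M j (u v : R) :
  \sum_(0 <= k < M.+1) 'C(M, k)%:R * 'C(k, j)%:R * u ^+ (k - j) * v ^+ (M - k)
  = 'C(M, j)%:R * (u + v) ^+ (M - j).
Proof.
have [le_jM | lt_Mj] := leqP j M; last first.
  rewrite bin_small // mul0r big1_seq // => k; rewrite mem_index_iota => /andP[_ lt_kM].
  by rewrite (@bin_small k j) ?mulr0 ?mul0r //; lia.
rewrite (big_cat_nat (leq0n j) (leqW le_jM)) /= big1_seq ?add0r; last first.
  by move=> k; rewrite mem_index_iota => /andP[_ lt_kj]; rewrite (@bin_small k j) ?mulr0 ?mul0r.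
rewrite -{1}(add0n j) big_addn subSn // addrC exprDn big_mkord mulr_sumr.
apply: eq_bigr => l _; rewrite -natrM -mul_bin_bin ?leq_addl // !addnK natrM.
by rewrite (_ : M - (l + j) = M - j - l)%N 1?mulr_natr; [ring | lia].
Qed.

Section CharZeroField.
Variable F : fieldType.
Hypothesis charF0 : has_pchar0 F.

Let natf_eq0 : forall n, (n%:R == 0 :> F) = (n == 0)%N := (pcharf0P F).1 charF0.

Lemma natf_fact_neq0 n : n`!%:R != 0 :> F.
Proof. by rewrite natf_eq0 -lt0n fact_gt0. Qed.

Lemma bin_natfE n k : (k <= n)%N ->
  'C(n, k)%:R = n`!%:R / (k`!%:R * (n - k)`!%:R) :> F.
Proof.
move=> le_kn; rewrite -(bin_fact le_kn) !natrM mulfK //.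
by rewrite mulf_neq0 ?natf_fact_neq0.
Qed.

Lemma catalan_natfE k : (catalan k)%:R = 'C(k.*2, k)%:R / k.+1%:R :> F.
Proof. exact: pchar0_natf_div charF0 _ _ (dvdn_catalan k). Qed.

Definition touchard (m : nat) (A B : F) : F :=
  \sum_(0 <= i < m) 'C(m.-1, i.*2)%:R * (catalan i)%:R * (A * B) ^+ i
                    * (A + B) ^+ (m.-1 - i.*2).

Lemma touchard_coef m j : (j < m)%N ->
  \sum_(0 <= i < j.+1) 'C(m.-1, i.*2)%:R * (catalan i)%:R * 'C(m.-1 - i.*2, j - i)%:R
  = m%:R^-1 * 'C(m, j)%:R * 'C(m, j.+1)%:R :> F.
Proof.
case: m => [//|m] /= lt_jm.
have term i : (i <= j)%N ->
    'C(m, i.*2)%:R * (catalan i)%:R * 'C(m - i.*2, j - i)%:R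
    = m.+1%:R^-1 * 'C(m.+1, j)%:R * ('C(j, i) * 'C(m.+1 - j, i.+1))%:R :> F.
  move=> le_ij; have [lt_m_ij | le_ij_m] := ltnP m (i + j).
    rewrite (@bin_small (m.+1 - j)) ?muln0 ?mulr0; last by lia.
    have [le_2i_m | lt_m_2i] := leqP i.*2 m; last by rewrite bin_small // !mul0r.
    by rewrite (@bin_small (m - i.*2)) ?mulr0 //; lia.
  rewrite catalan_natfE natrM !bin_natfE; try lia.
  rewrite (_ : i.*2 - i = i)%N; last by lia.
  rewrite (_ : m - i.*2 - (j - i) = m - j - i)%N; last by lia.
  rewrite (_ : m.+1 - j - i.+1 = m - j - i)%N; last by lia.
  rewrite (_ : m.+1 - j = (m - j).+1)%N; last by lia.
  by rewrite !factS !natrM; field; rewrite !natf_fact_neq0 ?nat1r ?natf_eq0.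
under eq_big_nat => i /andP[_ le_ij] do rewrite term //.
by rewrite -mulr_sumr -natr_sum Vandermonde_succ subnK 1?ltnW.
Qed.

Lemma valleyCat_touchard m (A B : F) : (0 < m)%N ->
  valleyCat m A B = A * touchard m A B.
Proof.
case: m => [//|m] _.
pose g i l : F := 'C(m, i.*2)%:R * (catalan i)%:R * 'C(m - i.*2, l)%:R
                  * A ^+ (m.+1 - (i + l)) * B ^+ (i + l).
have expand i : (i < m.+1)%N ->
    A * ('C(m, i.*2)%:R * (catalan i)%:R * (A * B) ^+ i * (A + B) ^+ (m - i.*2))
    = \sum_(0 <= l < m.+1 - i) g i l.
  move=> lt_im; have [lt_m_2i | le_2i_m] := ltnP m i.*2.
    by rewrite bin_small // !mul0r mulr0 big1 // => l _; rewrite /g bin_small // !mul0r.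
  rewrite -(@big_nat_widen0 _ 0 (m - i.*2).+1); last 2 first.
  - by lia.
  - by move=> l /andP[lt_l _]; rewrite /g (@bin_small (m - i.*2) l) // mulr0 !mul0r.
  rewrite exprDn big_mkord !mulr_sumr; apply: eq_bigr => l _.
  rewrite /g (_ : m.+1 - (i + l) = 1 + i + (m - i.*2 - l))%N; last by have := ltn_ord l; lia.
  by rewrite !exprD expr1 exprMn -mulr_natr; ring.
rewrite /touchard /= mulr_sumr.
under eq_big_nat => i /andP[_ lt_im] do rewrite expand //.
rewrite big_nat_antidiagonal; apply: eq_big_nat => j /andP[_ lt_jm].
rewrite -touchard_coef // !mulr_suml; apply: eq_big_nat => i /andP[_ le_ij].
by rewrite /g subnKC.
Qed.

Lemma valleyCat_addl_coef n j : (0 < n)%N -> (j <= n)%N ->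
  \sum_(0 <= k < j.+1) n%:R^-1 * 'C(n, k)%:R * 'C(n, k.+1)%:R * 'C(n - k, j - k)%:R
  = 'C(n + j, j.*2)%:R * (catalan j)%:R :> F.
Proof.
move=> n_gt0 le_jn.
have term k : (k <= j)%N -> n%:R^-1 * 'C(n, k)%:R * 'C(n, k.+1)%:R * 'C(n - k, j - k)%:R
    = n%:R^-1 * 'C(n, j)%:R * ('C(j, k) * 'C(n, k.+1))%:R :> F.
  move=> le_kj; transitivity (n%:R^-1 * ('C(n, k) * 'C(n - k, j - k))%:R * 'C(n, k.+1)%:R : F).
    by rewrite natrM; ring.
  by rewrite mul_bin_bin // !natrM; ring.
under eq_big_nat => k /andP[_ le_kj] do rewrite term //.
rewrite -mulr_sumr -natr_sum Vandermonde_succ catalan_natfE {term}.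
case: n n_gt0 le_jn => [//|n] _ le_jn.
rewrite !bin_natfE; try lia.
rewrite (_ : j.*2 - j = j)%N; last by lia.
rewrite (_ : n.+1 + j - j.+1 = n)%N; last by lia.
rewrite (_ : n.+1 + j - j.*2 = n.+1 - j)%N; last by lia.
by rewrite !factS !natrM; field; rewrite !natf_fact_neq0 ?nat1r ?natf_eq0.
Qed.

Lemma valleyCat_addl n (w y : F) : (0 < n)%N ->
  valleyCat n (w + y) y
  = \sum_(0 <= k < n.+1) 'C(n + k, k.*2)%:R * (catalan k)%:R * y ^+ k * w ^+ (n - k).
Proof.
move=> n_gt0.
pose g k l : F := n%:R^-1 * 'C(n, k)%:R * 'C(n, k.+1)%:R * 'C(n - k, l)%:R
                  * y ^+ (k + l) * w ^+ (n - (k + l)).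
rewrite /valleyCat (@big_nat_widen0 _ 0 n n.+1) //; last first.
  by move=> k /andP[le_nk lt_kn]; rewrite (@bin_small n k.+1) ?mulr0 ?mul0r //; lia.
transitivity (\sum_(0 <= k < n.+1) \sum_(0 <= l < n.+1 - k) g k l).
  apply: eq_big_nat => k /andP[_ lt_kn]; rewrite subSn // exprDn big_mkord mulr_sumr mulr_suml.
  apply: eq_bigr => l _; rewrite /g subnDA -mulr_natr exprD; ring.
rewrite big_nat_antidiagonal; apply: eq_big_nat => j /andP[_ lt_jn].
rewrite -valleyCat_addl_coef // !mulr_suml; apply: eq_big_nat => k /andP[_ le_kj].
by rewrite /g subnKC.
Qed.

Lemma sum_bin_valleyCat n (a b x : F) : (0 < n)%N ->
  \sum_(0 <= k < n) 'C(n.-1, k)%:R * valleyCat k.+1 a b * x ^+ k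
     * (x - a) ^+ (n.-1 - k) * (x - b) ^+ (n.-1 - k)
  = a * touchard n (a * b) (x ^+ 2).
Proof.
case: n => [//|n] _ /=; set q := (x - a) * (x - b).
pose h i k : F :=
  'C(n, k)%:R * 'C(k, i.*2)%:R * (x * (a + b)) ^+ (k - i.*2) * q ^+ (n - k).
have expand k : (k < n.+1)%N ->
    'C(n, k)%:R * (a * touchard k.+1 a b) * x ^+ k * (x - a) ^+ (n - k) * (x - b) ^+ (n - k)
    = a * \sum_(0 <= i < n.+1) (catalan i)%:R * (a * b * x ^+ 2) ^+ i * h i k.
  move=> lt_kn; rewrite /touchard /= (@big_nat_widen0 _ 0 k.+1 n.+1) //; last first.
    by move=> i /andP[lt_ki _]; rewrite bin_small ?mul0r //; lia.
  rewrite !mulr_sumr !mulr_suml; apply: eq_big_nat => i _; rewrite /h /q.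
  have [le_2i_k | lt_k_2i] := leqP i.*2 k; last by rewrite (@bin_small k) // !(mulr0, mul0r).
  have -> : x ^+ k = (x ^+ 2) ^+ i * x ^+ (k - i.*2) by rewrite -exprM mul2n -exprD subnKC.
  by rewrite !exprMn; ring.
under eq_big_nat => k /andP[_ lt_kn] do rewrite valleyCat_touchard // expand //.
rewrite -mulr_sumr exchange_big_nat; congr (a * _); apply: eq_big_nat => i _.
rewrite -mulr_sumr exprDn_mul_bin (_ : x * (a + b) + q = a * b + x ^+ 2); last by rewrite /q; ring.
by ring.
Qed.

End CharZeroField.

Local Open Scope complex_scope.

Theorem proposition3p1 (R : realType) (n : nat) (a b x : R[i]) :
  (1 <= n)%N -> b != 0 ->
  (\sum_(0 <= k < n) ('C(n.-1, k))%:R * valleyCat k.+1 a b * x ^+ k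
       * (x - a) ^+ (n.-1 - k) * (x - b) ^+ (n.-1 - k)
   = \sum_(0 <= k < n) (n%:R)^-1 * ('C(n, k))%:R * ('C(n, k.+1))%:R
       * x ^+ (k.*2) * a ^+ (n - k) * b ^+ (n.-1 - k))
  /\
  (\sum_(0 <= k < n) (n%:R)^-1 * ('C(n, k))%:R * ('C(n, k.+1))%:R
       * x ^+ (k.*2) * a ^+ (n - k) * b ^+ (n.-1 - k)
   = b^-1 * \sum_(0 <= k < n.+1) ('C(n + k, k.*2))%:R * (catalan k)%:R
       * x ^+ (k.*2) * (a * b - x ^+ 2) ^+ (n - k)).
Proof.
move=> n_gt0 b_neq0; have charC0 : has_pchar0 R[i] := pchar_num _.
have sqrX k : x ^+ k.*2 = (x ^+ 2) ^+ k by rewrite -mul2n exprM.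
have -> : \sum_(0 <= k < n) n%:R^-1 * 'C(n, k)%:R * 'C(n, k.+1)%:R
       * x ^+ k.*2 * a ^+ (n - k) * b ^+ (n.-1 - k)
    = b^-1 * valleyCat n (a * b) (x ^+ 2).
  rewrite mulr_sumr; apply: eq_big_nat => k /andP[_ lt_kn].
  rewrite sqrX (_ : n - k = (n.-1 - k).+1)%N; last by lia.
  by rewrite !exprS !exprMn; field; rewrite pnatr_eq0 -lt0n n_gt0 b_neq0.
split.
  rewrite sum_bin_valleyCat // valleyCat_touchard //.
  by rewrite [a * b]mulrC -mulrA mulKf.
rewrite -{1}[a * b](subrK (x ^+ 2)) valleyCat_addl //; congr (_ * _).
by apply: eq_big_nat => k _; rewrite sqrX.
Qed.
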